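(* SD-EFX allocations need not exist, even for additive valuations: consider $m=4$ items $\{1,2,3,4\}$ and $n=2$ agents with identical additive valuations $v(\{1\})=4$, $v(\{2\})=1+\epsilon$, $v(\{3\})=1$, $v(\{4\})=1-\epsilon$ for a small $\epsilon\in(0,1)$, so that both agents have the ordering $\pi=1\succ 2\succ 3\succ 4$. Then no allocation of the four items is SD-EFX with respect to $\pi_1=\pi_2=\pi$.
   Context: For an ordering $\pi$ (best to worst), $A\succeq^{\mathrm{sd}}_\pi B$ iff $|A|\ge|B|$ and for every $k\le|B|$ the $k$-th best item of $A$ under $\pi$ is ranked weakly above the $k$-th best item of $B$. An allocation $(A_1,A_2)$ is a partition of all items; it is SD-EFX if for all agents $i,j$ with $A_j\neq\emptyset$ and all $g\in A_j$, $A_i\succeq^{\mathrm{sd}}_{\pi_i}A_j\setminus\{g\}$. *)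

From mathcomp Require Import all_boot all_order all_algebra.
Set Implicit Arguments. Unset Strict Implicit. Unset Printing Implicit Defensive.
Import Order.TTheory GRing.Theory Num.Theory.

(* The rank of x is its position [index x pi]
   (0 = best); "x ranked weakly above y" means index x pi <= index y pi. *)
Definition is_ordering (T : finType) (pi : seq T) : Prop :=
  perm_eq pi (enum T).

(* The items of A listed best-to-worst under pi; its k-th entry is the
   (k+1)-th best item of A. *)
Definition ranked (T : finType) (pi : seq T) (A : {set T}) : seq T :=
  [seq x <- pi | x \in A].

(* A >=^sd_pi B. The default d of nth is irrelevant since k < #|B| <= #|A|. *)
Definition sd_geq (T : finType) (pi : seq T) (A B : {set T}) : Prop :=
  #|B| <= #|A| /\
  forall (k : nat) (d : T), k < #|B| ->
    index (nth d (ranked pi A) k) pi <= index (nth d (ranked pi B) k) pi.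

Definition is_allocation (T : finType) (n : nat) (A : 'I_n -> {set T}) : Prop :=
  (forall i j : 'I_n, i != j -> [disjoint A i & A j]) /\
  \bigcup_(i < n) A i = [set: T].

Definition sd_efx (T : finType) (n : nat) (pis : 'I_n -> seq T)
    (A : 'I_n -> {set T}) : Prop :=
  forall i j : 'I_n, A j != set0 ->
    forall g, g \in A j -> sd_geq (pis i) (A i) (A j :\ g).

Definition ordering_of (R : realDomainType) (T : finType) (v : T -> R)
    (pi : seq T) : Prop :=
  is_ordering pi /\ sorted (fun a b => v b < v a)%R pi.

(* The valuation of the example: items 1,2,3,4 are the ordinals 0,1,2,3. *)
Definition v_ex (R : realFieldType) (eps : R) (x : 'I_4) : R :=
  match val x with
  | 0 => 4%:R
  | 1 => 1 + eps
  | 2 => 1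
  | _ => 1 - eps
  end%R.

From mathcomp Require Import all_boot all_order all_algebra zify.
Import Order.TTheory GRing.Theory Num.Theory.
Set Implicit Arguments. Unset Strict Implicit. Unset Printing Implicit Defensive.

(* The valuations enter only through the common ordering pi they induce, and
   the argument works for ANY common ordering of ANY set of at least four
   items.  Let x be the best item and P the bundle containing it; the other
   bundle is the complement ~: P.
   - If P holds a second item h, then ~: P must SD-dominate P :\ h, which
     contains x; since x is the best item, the best item of ~: P must be x
     itself, contradicting x \in P (lemma [sd_geq_head]).
   - If P = [set x], then P must SD-dominate ~: P :\ g for any g outside P,
     a bundle of #|T| - 2 >= 2 items, while #|P| = 1.
   The file first shows that the k-th best item of a bundle is well defined
   ([size_ranked]), then the domination fact about the best item, then that
   in a two-agent allocation the bundles are complementary, and finally the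
   core contradiction [complementary_not_sd_efx], from which the theorem
   follows. *)

Lemma size_ranked (T : finType) (pi : seq T) (A : {set T}) :
  is_ordering pi -> size (ranked pi A) = #|A|.
Proof.
move=> /permP pi_perm.
rewrite /ranked size_filter pi_perm cardE /enum_mem -size_filter -filter_predI.
by congr size; apply: eq_filter => y; rewrite /= andbT.
Qed.

(* If a bundle B containing the best item x is SD-dominated by Q, then Q
   contains x: the best item of Q must rank weakly above x. *)
Lemma sd_geq_head (T : finType) (x : T) (s : seq T) (Q B : {set T}) :
  is_ordering (x :: s) -> x \in B -> sd_geq (x :: s) Q B -> x \in Q.
Proof.
move=> ord_xs xB [card_BQ dom].
have B_gt0 : 0 < #|B| by apply/card_gt0P; exists x.
have := dom 0 x B_gt0.
rewrite {2}/ranked /= xB /= eqxx leqn0.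
set y := nth x (ranked (x :: s) Q) 0.
have yQ : y \in Q.
  have ranked_gt0 : 0 < size (ranked (x :: s) Q).
    by rewrite size_ranked //; exact: leq_trans card_BQ.
  by have := mem_nth x ranked_gt0; rewrite mem_filter => /andP[].
by case: (eqVneq x y) => [-> |].
Qed.

Lemma allocation2_compl (T : finType) (A : 'I_2 -> {set T}) (i j : 'I_2) :
  is_allocation A -> i != j -> A j = ~: A i.
Proof.
move=> [disj cover] ij; apply/setP => x; rewrite inE.
have [xAi | xAi] := boolP (x \in A i).
  by rewrite (disjointFr (disj i j ij) xAi).
have : x \in \bigcup_(k < 2) A k by rewrite cover inE.
case/bigcupP => k _ xAk.
have [<- | kj] := eqVneq k j; first by rewrite xAk.
have ki : k = i.
  by move: i j k ij kj {xAi xAk}; do 3!case=> [[|[|//]] ?] //=;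
    move=> *; apply: val_inj.
by move: xAi; rewrite -ki xAk.
Qed.

Lemma complementary_not_sd_efx (T : finType) (x : T) (s : seq T)
    (P : {set T}) :
  3 < #|T| -> is_ordering (x :: s) -> x \in P ->
  (forall g, g \in P -> sd_geq (x :: s) (~: P) (P :\ g)) ->
  (forall g, g \in ~: P -> sd_geq (x :: s) P (~: P :\ g)) -> False.
Proof.
move=> T_ge4 ord_xs xP efx_P efx_Q.
have [P1 | P_ne1] := eqVneq P [set x].
  have card_Q : #|~: P| = #|T| - 1 by rewrite -(cardsC P) P1 cards1 addKn.
  have [g gQ] : exists g, g \in ~: P.
    by apply/card_gt0P; rewrite card_Q subn_gt0 (ltn_trans _ T_ge4).
  have card_Qg : #|~: P :\ g| = #|T| - 2.
    by have := cardsD1 g (~: P); rewrite gQ card_Q; lia.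
  have [card_le _] := efx_Q g gQ.
  by move: card_le; rewrite card_Qg P1 cards1; lia.
have [h hPx] : exists h, h \in P :\ x.
  apply/set0Pn; apply: contra P_ne1 => /eqP P_x.
  by rewrite -(setD1K xP) P_x setU0.
have hP : h \in P by move: hPx; rewrite inE => /andP[].
have xPh : x \in P :\ h by move: hPx; rewrite !inE eq_sym xP andbT => /andP[].
by have := sd_geq_head ord_xs xPh (efx_P h hP); rewrite inE xP.
Qed.

Theorem mainTheorem17 (R : realFieldType) (eps : R) :
  (0 < eps)%R -> (eps < 1)%R ->
  forall pi : seq 'I_4, ordering_of (v_ex eps) pi ->
  forall A : 'I_2 -> {set 'I_4}, is_allocation A ->
  ~ sd_efx (fun _ : 'I_2 => pi) A.
Proof.
move=> _ _ pi [ord_pi _] A alloc efx.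
case: pi ord_pi efx => [|x s] ord_xs efx.
  by have := perm_size ord_xs; rewrite size_enum_ord.
have [i _ xAi] : exists2 i, true & x \in A i.
  by apply/bigcupP; rewrite alloc.2 inE.
set j := lift i ord0.
have Aj : A j = ~: A i by apply: allocation2_compl; rewrite ?neq_lift.
have envy k l g : g \in A l -> sd_geq (x :: s) (A k) (A l :\ g).
  by move=> gAl; apply: efx => //; apply/set0Pn; exists g.
apply: (complementary_not_sd_efx _ ord_xs xAi); first by rewrite card_ord.
  by move=> g gAi; rewrite -Aj; exact: envy.
by move=> g; rewrite -Aj; exact: envy.
Qed.
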